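(* Let $n\in\mathbb{N}$. For each $k\in\mathbb{N}$ let $X_k = \{\alpha\in\mathcal{O}\,|\,N(\alpha) = k\}$, $t_k = |X_k/\mathcal{O}^{\times}|$ and $x_{1,k}, \dots, x_{t_k,k}$ be a set of representatives for $X_k/\mathcal{O}^{\times}$ (under right multiplication by units). For such $k$ define \[R_{k} := \left\{\begin{pmatrix}x_{i,k} & v\\ w & x_{j,k}\end{pmatrix}\,:\,1\leq i,j\leq t_k,\ v,w\in X_{n-k},\ x_{i,k}\overline{w} + v\overline{x_{j,k}} = 0\right\}.\] Then the following matrices are representatives for $(\text{GU}_2(D)_n\cap M_2(\mathcal{O})^{\times})/ \Gamma^{(1)}$ (cosets under right multiplication by $\Gamma^{(1)}$): $\bigcup_{k=m+1}^n R_k$ if $n=2m+1$ is odd, and $\left(\bigcup_{k=m+1}^n R_k\right)\cup R_{m}'$ if $n=2m$ is even. Here $R_m'\subset R_m$ is the finite subset obtained as follows: each matrix $\begin{pmatrix}x_{i,m} & v\\ w & x_{j,m}\end{pmatrix}\in R_m$ is equivalent under right multiplication by an antidiagonal element of $\Gamma^{(1)}$ to at most one other matrix of $R_m$, namely $\begin{pmatrix}x_{s,m} & \frac{x_{i,m}\overline{w}x_{t,m}}{m}\\ \frac{x_{j,m}\overline{v}x_{s,m}}{m} & x_{t,m}\end{pmatrix}$ where $v\sim x_{s,m}$ and $w\sim x_{t,m}$ under right unit multiplication; $R_m'$ consists of one chosen matrix from each such equivalence pair.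
   Context: $D$ is a definite quaternion algebra over $\mathbb{Q}$ ramified exactly at $\{p,\infty\}$ for a prime $p$, with standard involution $x\mapsto\overline{x}$ and reduced norm $N$; $\mathcal{O}$ is a fixed maximal order with (finite) unit group $\mathcal{O}^\times$. $\text{GU}_2(D) = \{g\in M_2(D)\,|\,g\overline{g}^T = \mu(g)I,\ \mu(g)\in\mathbb{Q}^\times\}$, and $\text{GU}_2(D)_n$ denotes its elements of similitude $\mu(g)=n$. $M_2(\mathcal{O})^\times = \text{GL}_2(D)\cap M_2(\mathcal{O})$. $\Gamma^{(1)} = \text{GU}_2(\mathcal{O})$ is the finite group of matrices $\begin{pmatrix}\alpha&0\\0&\beta\end{pmatrix}$ and $\begin{pmatrix}0&\alpha\\ \beta&0\end{pmatrix}$ with $\alpha,\beta\in\mathcal{O}^\times$. In the paper this is applied (for $p\in\{2,3\}$, $n=q$ a prime $\neq p$) to obtain Hecke representatives for the operator $T_{u,q}$. *)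

From HB Require Import structures.
From mathcomp Require Import all_boot all_order all_algebra.
From mathcomp Require Import ring.
Set Implicit Arguments. Unset Strict Implicit. Unset Printing Implicit Defensive.
Import Order.TTheory GRing.Theory Num.Theory.
Local Open Scope ring_scope.

(* The quaternion algebra D = (a,b)_Q over Q, a b nonzero integers:     *)
(* basis 1, i, j, k = ij with i^2 = a, j^2 = b, ij = - ji.             *)
(* An element (x0,x1,x2,x3) stands for x0 + x1 i + x2 j + x3 k.        *)
Definition quat (a b : int) : Type := (rat * rat * rat * rat)%type.

Section Quat.
Variables (a b : int).

Local Notation quat := (quat a b).
HB.instance Definition _ := GRing.Zmodule.on quat.

Local Notation A := (a%:~R : rat).
Local Notation B := (b%:~R : rat).

Definition qmk (x0 x1 x2 x3 : rat) : quat := (x0, x1, x2, x3).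

Definition qone : quat := qmk 1 0 0 0.

Definition qmul (x y : quat) : quat :=
  let: (x0, x1, x2, x3) := x in
  let: (y0, y1, y2, y3) := y in
  qmk (x0 * y0 + A * x1 * y1 + B * x2 * y2 - A * B * x3 * y3)
      (x0 * y1 + x1 * y0 - B * x2 * y3 + B * x3 * y2)
      (x0 * y2 + x2 * y0 + A * x1 * y3 - A * x3 * y1)
      (x0 * y3 + x3 * y0 + x1 * y2 - x2 * y1).

Lemma qaddE (x0 x1 x2 x3 y0 y1 y2 y3 : rat) :
  (qmk x0 x1 x2 x3 : quat) + qmk y0 y1 y2 y3 =
  qmk (x0 + y0) (x1 + y1) (x2 + y2) (x3 + y3).
Proof. by []. Qed.

Lemma qmulA : associative qmul.
Proof.
move=> [[[x0 x1] x2] x3] [[[y0 y1] y2] y3] [[[z0 z1] z2] z3] /=.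
rewrite /qmk; congr (_, _, _, _); ring.
Qed.

Lemma qmul1 : left_id qone qmul.
Proof.
move=> [[[x0 x1] x2] x3] /=; rewrite /qmk; congr (_, _, _, _); ring.
Qed.

Lemma qmulr1 : right_id qone qmul.
Proof.
move=> [[[x0 x1] x2] x3] /=; rewrite /qmk; congr (_, _, _, _); ring.
Qed.

Lemma qmulDl : left_distributive qmul +%R.
Proof.
move=> [[[x0 x1] x2] x3] [[[y0 y1] y2] y3] [[[z0 z1] z2] z3].
rewrite /= !qaddE /qmk; congr (_, _, _, _); ring.
Qed.

Lemma qmulDr : right_distributive qmul +%R.
Proof.
move=> [[[x0 x1] x2] x3] [[[y0 y1] y2] y3] [[[z0 z1] z2] z3].
rewrite /= !qaddE /qmk; congr (_, _, _, _); ring.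
Qed.

Lemma qone_neq0 : qone != 0.
Proof. by []. Qed.

HB.instance Definition _ :=
  GRing.Zmodule_isNzRing.Build quat qmulA qmul1 qmulr1 qmulDl qmulDr qone_neq0.

Definition qc (r : rat) : quat := qmk r 0 0 0.

Definition qconj (x : quat) : quat :=
  let: (x0, x1, x2, x3) := x in qmk x0 (- x1) (- x2) (- x3).

Definition nrd (x : quat) : rat :=
  let: (x0, x1, x2, x3) := x in
  x0 ^+ 2 - A * x1 ^+ 2 - B * x2 ^+ 2 + A * B * x3 ^+ 2.

Definition is_order (O : quat -> Prop) : Prop :=
  exists e : 'I_4 -> quat,
    [/\ (forall r : 'I_4 -> rat, \sum_i qc (r i) * e i = 0 -> forall i, r i = 0),
        (forall x, O x <-> exists c : 'I_4 -> int, x = \sum_i (e i) *~ (c i)),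
        O 1 &
        (forall x y, O x -> O y -> O (x * y))].

Definition is_maximal_order (O : quat -> Prop) : Prop :=
  is_order O /\
  forall O' : quat -> Prop, is_order O' -> (forall x, O x -> O' x) ->
    forall x, O' x -> O x.

Definition unitO (O : quat -> Prop) (u : quat) : Prop :=
  O u /\ exists v, [/\ O v, u * v = 1 & v * u = 1].

Definition Xk (O : quat -> Prop) (k : nat) (x : quat) : Prop :=
  O x /\ nrd x = k%:R.

Definition reps_of (O : quat -> Prop) (X : quat -> Prop) (s : seq quat) : Prop :=
  [/\ (forall i, (i < size s)%N -> X (nth 0 s i)),
      (forall x, X x -> exists i u, [/\ (i < size s)%N, unitO O u & x = nth 0 s i * u]) &
      (forall i j u, (i < size s)%N -> (j < size s)%N -> unitO O u ->
          nth 0 s i = nth 0 s j * u -> i = j)].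

Definition mx2 (x y z w : quat) : 'M[quat]_2 :=
  \matrix_(i < 2, j < 2)
    if (i == 0 :> nat) then (if (j == 0 :> nat) then x else y)
    else (if (j == 0 :> nat) then z else w).

Definition conjT (g : 'M[quat]_2) : 'M[quat]_2 := \matrix_(i, j) qconj (g j i).

Definition GU2n (n : nat) (g : 'M[quat]_2) : Prop :=
  g *m conjT g = (qc n%:R)%:M.

(* M_2(O)^x = GL_2(D) \cap M_2(O) *)
Definition inM2O (O : quat -> Prop) (g : 'M[quat]_2) : Prop :=
  forall i j, O (g i j).
Definition invertible2 (g : 'M[quat]_2) : Prop :=
  exists h : 'M[quat]_2, g *m h = 1%:M /\ h *m g = 1%:M.
Definition M2O_units (O : quat -> Prop) (g : 'M[quat]_2) : Prop :=
  inM2O O g /\ invertible2 g.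

(* Gamma^(1) = GU_2(O): diagonal and antidiagonal matrices with unit entries *)
Definition Gamma1_antidiag (O : quat -> Prop) (g : 'M[quat]_2) : Prop :=
  exists al be, [/\ unitO O al, unitO O be & g = mx2 0 al be 0].
Definition Gamma1 (O : quat -> Prop) (g : 'M[quat]_2) : Prop :=
  (exists al be, [/\ unitO O al, unitO O be & g = mx2 al 0 0 be])
  \/ Gamma1_antidiag O g.

Definition coset_reps (G H S : 'M[quat]_2 -> Prop) : Prop :=
  [/\ (forall s, S s -> G s),
      (forall g, G g -> exists s h, [/\ S s, H h & g = s *m h]) &
      (forall s s' h, S s -> S s' -> H h -> s' = s *m h -> s = s')].

Definition xr (xs : nat -> seq quat) (k i : nat) : quat := nth 0 (xs k) i.

Definition Rk (O : quat -> Prop) (xs : nat -> seq quat) (n k : nat)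
    (g : 'M[quat]_2) : Prop :=
  exists i j v w,
    [/\ (i < size (xs k))%N /\ (j < size (xs k))%N,
        Xk O (n - k) v, Xk O (n - k) w,
        xr xs k i * qconj w + v * qconj (xr xs k j) = 0 &
        g = mx2 (xr xs k i) v w (xr xs k j)].

End Quat.

(* Hilbert symbol (a,b)_l for nonzero integers a, b and a prime l,     *)
(* by the explicit formulas (Serre, A Course in Arithmetic, III.1.2). *)
Definition legendre (u : int) (l : nat) : int :=
  if (l%:Z %| u)%Z then 0
  else if has (fun x : nat => (l%:Z %| (x%:Z) ^+ 2 - u)%Z) (iota 0 l) then 1 else -1.

Definition hilbert (a b : int) (l : nat) : int :=
  let al := logn l `|a|%N in
  let be := logn l `|b|%N in
  let u := (a %/ (l ^ al)%:Z)%Z in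
  let v := (b %/ (l ^ be)%:Z)%Z in
  if l == 2%N then
    let eps (t : int) := (t %% 4)%Z == 3 in
    let ome (t : int) := ((t %% 8)%Z == 3) || ((t %% 8)%Z == 5) in
    (-1) ^+ (nat_of_bool (eps u && eps v) + nat_of_bool (odd al && ome v)
             + nat_of_bool (odd be && ome u))
  else
    (-1) ^+ (al * be * (l.-1)./2) * legendre u l ^+ be * legendre v l ^+ al.

(* (a,b)_Q is a definite quaternion algebra ramified exactly at {p, oo}:
   ramified at oo (a < 0, b < 0) and, for primes l, ramified at l iff l = p. *)
Definition ramified_exactly_at_p_infty (a b : int) (p : nat) : Prop :=
  [/\ a < 0, b < 0 &
      forall l : nat, prime l -> (hilbert a b l = -1 <-> l = p)].

(* Since D is definite, the reduced norm is nonnegative, and on an order it takes integer values: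
   its square is the determinant of left multiplication on the lattice.  For
   g = [[alpha, beta], [gamma, delta]] in GU_2(D)_n with entries in O, invertibility makes both
   the rows and the columns of g orthogonal of norm n, so N alpha = N delta = k and
   N beta = N gamma = n - k.  Right multiplication by diag(u1, u2) turns alpha and delta into
   chosen representatives, and an antidiagonal element of Gamma^(1) exchanges k and n - k, so
   every coset meets some R_k with 2k >= n.  Units have norm 1 and the representatives are
   irredundant, so this element is unique when 2k > n; when 2k = n the antidiagonal elements
   pair up the matrices of R_m, and R_m' keeps one matrix of each pair. *)

From HB Require Import structures.
From mathcomp Require Import all_boot all_order all_algebra.
From mathcomp Require Import ring lra zify.
Import Order.TTheory GRing.Theory Num.Theory.
Set Implicit Arguments. Unset Strict Implicit. Unset Printing Implicit Defensive.
Local Open Scope ring_scope.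

Section QuaternionArithmetic.
Variables a b : int.
Implicit Types (x y z v w : quat a b) (r s : rat).
Local Notation qc := (qc a b).

Local Ltac quat_ring := rewrite /= /qmk; congr (_, _, _, _); ring.

Lemma qmulE x y : x * y = qmul x y.
Proof. by []. Qed.

Lemma qconjM x y : qconj (x * y) = qconj y * qconj x.
Proof. by case: x => [[[? ?] ?] ?]; case: y => [[[? ?] ?] ?]; quat_ring. Qed.

Lemma qconjD x y : qconj (x + y) = qconj x + qconj y.
Proof. by case: x => [[[? ?] ?] ?]; case: y => [[[? ?] ?] ?]; rewrite /= qaddE; quat_ring. Qed.

Lemma qconj0 : qconj (0 : quat a b) = 0.
Proof. by quat_ring. Qed.

Lemma qconjK x : qconj (qconj x) = x.
Proof. by case: x => [[[? ?] ?] ?]; quat_ring. Qed.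

Lemma qc_central r x : qc r * x = x * qc r.
Proof. by case: x => [[[? ?] ?] ?]; quat_ring. Qed.

Lemma qcM r s : qc r * qc s = qc (r * s).
Proof. by quat_ring. Qed.

Lemma qcD r s : qc (r + s) = qc r + qc s.
Proof. by rewrite /qc qaddE; quat_ring. Qed.

Lemma qc1 : qc 1 = 1.
Proof. by []. Qed.

Lemma qc_inj : injective qc.
Proof. by move=> r s []. Qed.

Lemma qc_mulVr r : r != 0 -> qc r^-1 * qc r = 1.
Proof. by move=> r0; rewrite qcM mulVf. Qed.

Lemma mulq_conjr x : x * qconj x = qc (nrd x).
Proof. by case: x => [[[? ?] ?] ?]; quat_ring. Qed.

Lemma mulq_conjl x : qconj x * x = qc (nrd x).
Proof. by case: x => [[[? ?] ?] ?]; quat_ring. Qed.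

Lemma nrdM x y : nrd (x * y) = nrd x * nrd y.
Proof. by case: x => [[[? ?] ?] ?]; case: y => [[[? ?] ?] ?]; rewrite /=; ring. Qed.

Lemma nrd1 : nrd (1 : quat a b) = 1.
Proof. by rewrite /=; ring. Qed.

Lemma qmulI x y z : nrd x != 0 -> x * y = x * z -> y = z.
Proof.
move=> nx /(congr1 (fun t => qc (nrd x)^-1 * qconj x * t)).
by rewrite /= !mulrA -!(mulrA _ (qconj x)) mulq_conjl qc_mulVr // !mul1r.
Qed.

Lemma nrd_ge0 x : a < 0 -> b < 0 -> 0 <= nrd x.
Proof.
move=> ha hb; case: x => [[[x0 x1] x2] x3] /=.
have hA : (a%:~R : rat) < 0 by rewrite ltrz0.
have hB : (b%:~R : rat) < 0 by rewrite ltrz0.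
have h1 : 0 <= - a%:~R * x1 ^+ 2 by rewrite mulr_ge0 ?sqr_ge0 // oppr_ge0 ltW.
have h2 : 0 <= - b%:~R * x2 ^+ 2 by rewrite mulr_ge0 ?sqr_ge0 // oppr_ge0 ltW.
have h3 : 0 <= a%:~R * b%:~R * x3 ^+ 2.
  by rewrite mulr_ge0 ?sqr_ge0 // -mulrNN mulr_ge0 // oppr_ge0 ltW.
have h0 := sqr_ge0 x0.
lra.
Qed.

Lemma qorth_conj x y v w :
  x * qconj w + v * qconj y = 0 -> w * qconj x + y * qconj v = 0.
Proof.
move=> /(congr1 (@qconj a b)).
by rewrite qconjD !qconjM !qconjK qconj0 addrC.
Qed.

Lemma qorth_cols x y v w r :
  r != 0 -> nrd x = r -> nrd y = r ->
  x * qconj w + v * qconj y = 0 -> qconj x * v + qconj w * y = 0.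
Proof.
move=> r0 hx hy /(congr1 (fun t => qc r^-1 * (qconj x * t * y))).
rewrite /= mulr0 mul0r mulr0 mulrDr mulrDl.
have -> : qconj x * (x * qconj w) * y = qc r * (qconj w * y).
  by rewrite (mulrA (qconj x)) mulq_conjl hx -mulrA.
have -> : qconj x * (v * qconj y) * y = qc r * (qconj x * v).
  by rewrite -mulrA -(mulrA v) mulq_conjl hy mulrA qc_central.
by rewrite -mulrDr mulrA qc_mulVr // mul1r addrC.
Qed.

End QuaternionArithmetic.

Section ReducedNormOnOrders.
Variables a b : int.
Implicit Types (x y : quat a b) (O : quat a b -> Prop).
Local Notation qc := (qc a b).

Definition qcoord (j : nat) y : rat :=
  let: (y0, y1, y2, y3) := y in
  match j with 0 => y0 | 1 => y1 | 2 => y2 | _ => y3 end.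

Lemma qcoordB j : {morph qcoord j : x y / x - y}.
Proof. by case: j => [|[|[|j]]] [[[? ?] ?] ?] [[[? ?] ?] ?]. Qed.

HB.instance Definition _ j :=
  GRing.isZmodMorphism.Build (quat a b) rat (qcoord j) (qcoordB j).

Lemma qcoord_qc (j : 'I_4) r y : qcoord j (qc r * y) = r * qcoord j y.
Proof.
rewrite qmulE; case: y => [[[? ?] ?] ?].
by case: j => [[|[|[|[|//]]]] ?]; rewrite /=; ring.
Qed.

Lemma qcoord_eq0 y : (forall j : 'I_4, qcoord j y = 0) -> y = 0.
Proof.
case: y => [[[y0 y1] y2] y3] h.
have := h (@Ordinal 4 0 isT); have := h (@Ordinal 4 1 isT).
have := h (@Ordinal 4 2 isT); have := h (@Ordinal 4 3 isT).
by move=> /= -> -> -> ->.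
Qed.

Definition lmul_mx x : 'M[rat]_4 :=
  let: (x0, x1, x2, x3) := x in
  let A : rat := a%:~R in let B : rat := b%:~R in
  \matrix_(i < 4, j < 4)
    match nat_of_ord i, nat_of_ord j with
    | 0, 0 => x0 | 0, 1 => x1 | 0, 2 => x2 | 0, _ => x3
    | 1, 0 => A * x1 | 1, 1 => x0 | 1, 2 => - (A * x3) | 1, _ => - x2
    | 2, 0 => B * x2 | 2, 1 => B * x3 | 2, 2 => x0 | 2, _ => x1
    | _, 0 => - (A * B * x3) | _, 1 => - (B * x2) | _, 2 => A * x1 | _, _ => x0
    end.

Lemma qcoord_mul (j : 'I_4) x y :
  qcoord j (x * y) = \sum_(k < 4) qcoord k y * lmul_mx x k j.
Proof.
rewrite !big_ord_recl big_ord0 qmulE.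
case: x => [[[? ?] ?] ?]; case: y => [[[? ?] ?] ?].
by case: j => [[|[|[|[|//]]]] ?]; rewrite /= !mxE /bump /=; ring.
Qed.

Lemma det_lmul_mx x : \det (lmul_mx x) = nrd x ^+ 2.
Proof.
case: x => [[[x0 x1] x2] x3] /=.
rewrite (expand_det_row _ 0) !big_ord_recl big_ord0 /cofactor.
rewrite !(expand_det_row _ 0) !big_ord_recl !big_ord0 /cofactor.
rewrite !(expand_det_row _ 0) !big_ord_recl !big_ord0 /cofactor.
rewrite !det_mx11 !mxE /bump /= ?addn0 ?add0n ?exprD ?expr1 ?expr0.
ring.
Qed.

Lemma qcoord_mx_unit (e : 'I_4 -> quat a b) :
  (forall r : 'I_4 -> rat, \sum_i qc (r i) * e i = 0 -> forall i, r i = 0) ->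
  \det (\matrix_(i < 4, j < 4) qcoord j (e i)) != 0.
Proof.
move=> free; apply/negP => /det0P [v v0 vE]; apply: (negP v0).
have : \sum_i qc (v 0 i) * e i = 0.
  apply: qcoord_eq0 => j; rewrite raddf_sum.
  transitivity ((v *m \matrix_(i < 4, j < 4) qcoord j (e i)) 0 j).
    by rewrite mxE; apply: eq_bigr => i _; rewrite !mxE; exact: qcoord_qc.
  by rewrite vE mxE.
by move=> /free v_eq0; apply/eqP/rowP => k; rewrite mxE v_eq0.
Qed.

(* Left multiplication by [x] preserves the lattice [O], so it has an integer matrix [M] in a
   Z-basis of [O]; over Q that matrix is conjugate to [lmul_mx x], whose determinant is [N x ^ 2]. *)
Lemma order_nrd_sqr_int O x : is_order O -> O x -> exists z : int, nrd x ^+ 2 = z%:~R.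
Proof.
case=> e [free lat _ Omul] Ox.
have Oe i : O (e i).
  apply/lat; exists (fun j => (i == j)%:Z).
  rewrite (bigD1 i) //= eqxx mulr1z big1 ?addr0 // => j /negPf.
  by rewrite eq_sym => ->; rewrite mulr0z.
have /fin_all_exists [c xe] : forall i, exists c : 'I_4 -> int, x * e i = \sum_j e j *~ c j.
  by move=> i; apply/lat/Omul.
pose E := \matrix_(i < 4, j < 4) qcoord j (e i).
pose M := \matrix_(i < 4, j < 4) ((c i j)%:~R : rat).
have EL : E *m lmul_mx x = M *m E.
  apply/matrixP => i j; rewrite !mxE.
  transitivity (qcoord j (x * e i)).
    by rewrite qcoord_mul; apply: eq_bigr => k _; rewrite !mxE.
  rewrite xe raddf_sum; apply: eq_bigr => k _.
  by rewrite !mxE raddfMz mulrzl.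
exists (\det (\matrix_(i < 4, j < 4) c i j)).
have -> : (\det (\matrix_(i < 4, j < 4) c i j))%:~R = \det M.
  by rewrite -det_map_mx; congr (\det _); apply/matrixP => i j; rewrite !mxE.
rewrite -det_lmul_mx; apply: (mulfI (qcoord_mx_unit free)).
by rewrite -det_mulmx EL det_mulmx mulrC.
Qed.

Lemma rat_sqr_int_nat (r : rat) (z : int) :
  0 <= r -> r ^+ 2 = z%:~R -> exists k : nat, r = k%:R.
Proof.
move=> r0 hr.
have den1 : denq r = 1.
  have num2 : numq r ^+ 2 = z * denq r ^+ 2.
    apply: (@intr_inj rat); rewrite !expr2 !intrM -!expr2 -hr.
    by rewrite numqE exprMn.
  have : (`|denq r| %| 1)%N.
    rewrite -(eqP (coprimeXl 2 (coprime_num_den r))) dvdn_gcd dvdnn andbT.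
    by rewrite -abszX num2 abszM abszX dvdn_mull // expnS dvdn_mulr.
  rewrite dvdn1 => /eqP d1.
  by rewrite -[denq r]gez0_abs ?d1 // ltW // denq_gt0.
have : 0 <= numq r by rewrite numq_ge0.
rewrite -{2}(divq_num_den r) den1 divr1.
by case: (numq r) => // k _; exists k.
Qed.

Lemma order_nrd_nat O x :
  a < 0 -> b < 0 -> is_order O -> O x -> exists k : nat, nrd x = k%:R.
Proof.
move=> ha hb oO Ox; have [z hz] := order_nrd_sqr_int oO Ox.
exact: rat_sqr_int_nat (nrd_ge0 x ha hb) hz.
Qed.

End ReducedNormOnOrders.

Section OrderUnits.
Variables (a b : int) (O : quat a b -> Prop).
Hypothesis oO : is_order O.
Implicit Types u v x y : quat a b.

Lemma order_mul x y : O x -> O y -> O (x * y).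
Proof. by case: oO => e [_ _ _]; apply. Qed.

Lemma unitOM u v : unitO O u -> unitO O v -> unitO O (u * v).
Proof.
move=> [Ou [u' [Ou' uu' u'u]]] [Ov [v' [Ov' vv' v'v]]].
split; first exact: order_mul.
exists (v' * u'); split; first exact: order_mul.
  by rewrite mulrA -(mulrA u) vv' mulr1.
by rewrite mulrA -(mulrA v') u'u mulr1.
Qed.

Lemma unitO_inv u : unitO O u -> exists v, [/\ unitO O v, u * v = 1 & v * u = 1].
Proof. by move=> [Ou [v [Ov uv vu]]]; exists v; split=> //; split=> //; exists u. Qed.

Lemma unitO_nrd u : a < 0 -> b < 0 -> unitO O u -> nrd u = 1.
Proof.
move=> ha hb [Ou [v [Ov uv _]]].
have [k hk] := order_nrd_nat ha hb oO Ou; have [l hl] := order_nrd_nat ha hb oO Ov.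
have : nrd (u * v) = 1 by rewrite uv nrd1.
by rewrite nrdM hk hl -natrM => /eqP; rewrite pnatr_eq1 muln_eq1 => /andP[/eqP ->].
Qed.

End OrderUnits.

Section TwoByTwo.
Variables a b : int.
Implicit Types x y z w : quat a b.

Lemma mx2E (g : 'M[quat a b]_2) : g = mx2 (g 0 0) (g 0 1) (g 1 0) (g 1 1).
Proof.
apply/matrixP => i j; rewrite !mxE.
by case: i => [[|[|//]] ?]; case: j => [[|[|//]] ?] /=; congr (g _ _); apply: val_inj.
Qed.

Lemma mx2_inj x y z w x' y' z' w' :
  mx2 x y z w = mx2 x' y' z' w' -> [/\ x = x', y = y', z = z' & w = w'].
Proof.
move=> e; have ij := congr1 (fun g : 'M_2 => g _ _) e.
by move: (ij 0 0) (ij 0 1) (ij 1 0) (ij 1 1); rewrite !mxE.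
Qed.

Lemma mx2_mul x y z w x' y' z' w' :
  mx2 x y z w *m mx2 x' y' z' w' =
  mx2 (x * x' + y * z') (x * y' + y * w') (z * x' + w * z') (z * y' + w * w').
Proof.
apply/matrixP => i j; rewrite !mxE !big_ord_recl big_ord0 !mxE.
by case: i => [[|[|//]] ?]; case: j => [[|[|//]] ?] /=; rewrite addr0.
Qed.

Lemma conjT_mx2 x y z w :
  conjT (mx2 x y z w) = mx2 (qconj x) (qconj z) (qconj y) (qconj w).
Proof.
by apply/matrixP => i j; rewrite !mxE; case: i => [[|[|//]] ?]; case: j => [[|[|//]] ?].
Qed.

Lemma scalar_mx2 x : (x%:M : 'M_2) = mx2 x 0 0 x.
Proof.
by apply/matrixP => i j; rewrite !mxE; case: i => [[|[|//]] ?]; case: j => [[|[|//]] ?].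
Qed.

Lemma qc_scalar_mxC (g : 'M[quat a b]_2) r : g *m (qc a b r)%:M = (qc a b r)%:M *m g.
Proof.
by rewrite [g]mx2E !scalar_mx2 !mx2_mul !mulr0 !mul0r !addr0 !add0r !(qc_central r).
Qed.

(* [g g^* = n] is the row condition; invertibility of [g] gives [g^* g = n] as well. *)
Lemma GU2n_mx2_norms n x y z w :
  GU2n n (mx2 x y z w) -> invertible2 (mx2 x y z w) ->
  [/\ nrd x + nrd y = n%:R, nrd z + nrd w = n%:R,
      x * qconj z + y * qconj w = 0,
      nrd x + nrd z = n%:R & nrd y + nrd w = n%:R].
Proof.
move=> GU [h [gh hg]].
have GU' : conjT (mx2 x y z w) *m mx2 x y z w = (qc a b n%:R)%:M.
  have -> : conjT (mx2 x y z w) = h *m (qc a b n%:R)%:M by rewrite -GU mulmxA hg mul1mx.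
  by rewrite qc_scalar_mxC -mulmxA hg mulmx1.
move: GU GU'; rewrite /GU2n conjT_mx2 !mx2_mul scalar_mx2.
case/mx2_inj => e1 e2 _ e4; case/mx2_inj => f1 _ _ f4.
move: e1 e4 f1 f4; rewrite !mulq_conjr !mulq_conjl -!qcD.
by move=> /qc_inj -> /qc_inj -> /qc_inj -> /qc_inj ->.
Qed.

Definition GU_shape (n k : nat) x y z w :=
  [/\ nrd x = k%:R, nrd w = k%:R, nrd y = (n - k)%:R, nrd z = (n - k)%:R &
      x * qconj z + y * qconj w = 0].

Lemma GU_shape_swap n k x y z w :
  (k <= n)%N -> GU_shape n k x y z w -> GU_shape n (n - k) y x w z.
Proof. by move=> kn [? ? ? ? rows]; split; rewrite ?subKn // addrC. Qed.

Lemma GU_shape_unitary n k x y z w :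
  (0 < k)%N -> (k <= n)%N -> GU_shape n k x y z w ->
  mx2 x y z w *m conjT (mx2 x y z w) = (qc a b n%:R)%:M /\
  conjT (mx2 x y z w) *m mx2 x y z w = (qc a b n%:R)%:M.
Proof.
move=> k0 kn [hx hw hy hz rows].
have kn' : (k%:R + (n - k)%:R : rat) = n%:R by rewrite -natrD subnKC.
have k0' : (k%:R : rat) != 0 by rewrite pnatr_eq0 -lt0n.
have cols := qorth_cols k0' hx hw rows.
have cols' : qconj y * x + qconj w * z = 0.
  by move: (congr1 (@qconj a b) cols); rewrite qconjD !qconjM !qconjK qconj0.
rewrite conjT_mx2 !mx2_mul scalar_mx2 !mulq_conjr !mulq_conjl hx hy hz hw -!qcD.
by rewrite [((n - k)%:R + _)]addrC !kn' rows (qorth_conj rows) cols cols'.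
Qed.

End TwoByTwo.

Section CosetRepresentatives.
Variables (a b : int) (O : quat a b -> Prop) (xs : nat -> seq (quat a b)).
Hypotheses (ha : a < 0) (hb : b < 0) (oO : is_order O).
Hypothesis reps : forall k, reps_of O (Xk O k) (xs k).
Implicit Types (u v w x y z : quat a b) (g h s : 'M[quat a b]_2).

Lemma M2O_GU2n_shape n g :
  M2O_units O g -> GU2n n g ->
  exists2 k, (k <= n)%N & GU_shape n k (g 0 0) (g 0 1) (g 1 0) (g 1 1).
Proof.
move=> [Og inv] GU; rewrite [g]mx2E in GU inv.
have [e1 e2 rows e3 _] := GU2n_mx2_norms GU inv.
have [k hk] := order_nrd_nat ha hb oO (Og 0 0).
have [l hl] := order_nrd_nat ha hb oO (Og 0 1).
have kln : (k + l)%N = n by apply/eqP; rewrite -(eqr_nat rat) natrD -hk -hl e1.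
have kn : (k <= n)%N by rewrite -kln leq_addr.
have hz : nrd (g 1 0) = (n - k)%:R by rewrite natrB // -e3 hk addrAC subrr add0r.
exists k => //; split=> //; last by rewrite hl -kln addKn.
by apply: (addrI (nrd (g 1 0))); rewrite e2 hz -natrD subnK.
Qed.

Lemma unitO_mul_conj u : unitO O u -> u * qconj u = 1.
Proof. by move=> Uu; rewrite mulq_conjr (unitO_nrd oO ha hb Uu). Qed.

Lemma GU_shape_Rk_decomposition n k x y z w :
  O x -> O y -> O z -> O w -> GU_shape n k x y z w ->
  exists s u1 u2, [/\ Rk O xs n k s, unitO O u1, unitO O u2 &
                      mx2 x y z w = s *m mx2 u1 0 0 u2].
Proof.
move=> Ox Oy Oz Ow [hx hw hy hz rows].
have [_ rep _] := reps k.
have [i [u1 [hi U1 ex]]] := rep x (conj Ox hx).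
have [j [u2 [hj U2 ew]]] := rep w (conj Ow hw).
have [v1 [V1 u1v1 v1u1]] := unitO_inv U1.
have [v2 [V2 u2v2 v2u2]] := unitO_inv U2.
have xi : xr xs k i = x * v1 by rewrite ex -mulrA u1v1 mulr1.
have xj : xr xs k j = w * v2 by rewrite ew -mulrA u2v2 mulr1.
have nrd_unit v t : unitO O v -> nrd (t * v) = nrd t.
  by move=> Uv; rewrite nrdM (unitO_nrd oO ha hb Uv) mulr1.
exists (mx2 (xr xs k i) (y * v2) (z * v1) (xr xs k j)), u1, u2; split => //.
  exists i, j, (y * v2), (z * v1); split => //.
  - by split; [apply: order_mul => //; case: V2 | rewrite nrd_unit].
  - by split; [apply: order_mul => //; case: V1 | rewrite nrd_unit].
  - rewrite xi xj !qconjM -(mulrA x) (mulrA v1) unitO_mul_conj // mul1r.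
    by rewrite -(mulrA y) (mulrA v2) unitO_mul_conj // mul1r.
by rewrite mx2_mul !mulr0 !addr0 !add0r -ex -ew -!mulrA v2u2 v1u1 !mulr1.
Qed.

Lemma M2O_GU2n_Rk_decomposition n g :
  M2O_units O g -> GU2n n g ->
  exists k s h, [/\ (k <= n)%N, (n - k <= k)%N, Rk O xs n k s, Gamma1 O h & g = s *m h].
Proof.
move=> Mg GU; have Og := Mg.1.
have [k kn shape] := M2O_GU2n_shape Mg GU.
have [nk_le_k | k_lt_nk] := leqP (n - k) k.
  have [s [u1 [u2 [Rs U1 U2 eg]]]] :=
    GU_shape_Rk_decomposition (Og 0 0) (Og 0 1) (Og 1 0) (Og 1 1) shape.
  exists k, s, (mx2 u1 0 0 u2); split=> //; first by left; exists u1, u2.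
  by rewrite [g]mx2E eg.
have [s [u1 [u2 [Rs U1 U2 eg]]]] :=
  GU_shape_Rk_decomposition (Og 0 1) (Og 0 0) (Og 1 1) (Og 1 0) (GU_shape_swap kn shape).
exists (n - k)%N, s, (mx2 0 u1 u2 0); split; rewrite ?subKn ?leq_subr //; first exact: ltnW.
  by right; exists u1, u2.
have -> : mx2 0 u1 u2 0 = mx2 u1 0 0 u2 *m mx2 0 1 1 0.
  by rewrite mx2_mul !mulr0 !mulr1 !addr0 !add0r.
by rewrite mulmxA -eg mx2_mul !mulr0 !mulr1 !addr0 !add0r -mx2E.
Qed.

Lemma Rk_M2O_GU2n n k s :
  (0 < k)%N -> (k <= n)%N -> Rk O xs n k s -> M2O_units O s /\ GU2n n s.
Proof.
move=> k0 kn [i [j [v [w [[hi hj] [Ov hv] [Ow hw] rows ->]]]]].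
have [repX _ _] := reps k; have [Oxi nxi] := repX i hi; have [Oxj nxj] := repX j hj.
have [GU GU'] := GU_shape_unitary k0 kn (And5 nxi nxj hv hw rows).
have n0 : (n%:R : rat) != 0 by rewrite pnatr_eq0 -lt0n (leq_trans k0 kn).
split=> //; split.
  by move=> p q; rewrite mxE; case: p q => [[|[|//]] ?] [[|[|//]] ?].
exists (conjT (mx2 (xr xs k i) v w (xr xs k j)) *m (qc a b n%:R^-1)%:M); split.
  by rewrite mulmxA GU -scalar_mxM qcM mulfV.
by rewrite qc_scalar_mxC -mulmxA GU' -scalar_mxM qcM mulVf.
Qed.

Lemma nrd_xr k l : (l < size (xs k))%N -> nrd (xr xs k l) = k%:R.
Proof. by move=> hl; have [repX _ _] := reps k; case: (repX l hl). Qed.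

Lemma Rk_coset_diag_eq n k k' s s' u1 u2 :
  (0 < k)%N -> Rk O xs n k s -> Rk O xs n k' s' -> unitO O u1 -> unitO O u2 ->
  s' = s *m mx2 u1 0 0 u2 -> s' = s.
Proof.
move=> k0 [i [j [v [w [[hi hj] _ _ _ ->]]]]] [i' [j' [v' [w' [[hi' hj'] _ _ _ ->]]]]].
move=> U1 U2 es'; move: (es'); rewrite mx2_mul !mulr0 !addr0 !add0r => /mx2_inj [e1 _ _ e4].
have k'k : k' = k.
  apply/eqP; rewrite -(eqr_nat rat) -(nrd_xr hi') e1.
  by rewrite nrdM (unitO_nrd oO ha hb U1) mulr1 nrd_xr.
subst k'; have [_ _ uniq] := reps k.
have ii : i' = i := uniq _ _ _ hi' hi U1 e1.
have jj : j' = j := uniq _ _ _ hj' hj U2 e4.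
subst i' j'.
have nx m : (m < size (xs k))%N -> nrd (xr xs k m) != 0.
  by move=> hm; rewrite nrd_xr // pnatr_eq0 -lt0n.
have u1_1 : u1 = 1 by apply/esym/(qmulI (nx i hi)); rewrite mulr1 -e1.
have u2_1 : u2 = 1 by apply/esym/(qmulI (nx j hj)); rewrite mulr1 -e4.
by rewrite es' u1_1 u2_1 mx2_mul !mulr1 !mulr0 !addr0 !add0r.
Qed.

Lemma Rk_coset_antidiag_norm n k k' s s' h :
  Rk O xs n k s -> Rk O xs n k' s' -> Gamma1_antidiag O h -> s' = s *m h -> k' = (n - k)%N.
Proof.
move=> [i [j [v [w [_ [_ hv] _ _ ->]]]]] [i' [j' [v' [w' [[hi' _] _ _ _ ->]]]]].
move=> [al [be [_ Ube ->]]]; rewrite mx2_mul mulr0 add0r => /mx2_inj [e1 _ _ _].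
apply/eqP; rewrite -(eqr_nat rat) -(nrd_xr hi') e1.
by rewrite nrdM (unitO_nrd oO ha hb Ube) mulr1 hv.
Qed.

Lemma Gamma1_antidiag_divl ga h :
  Gamma1_antidiag O ga -> Gamma1 O h -> exists2 h', Gamma1 O h' & h = ga *m h'.
Proof.
move=> [al [be [Ual Ube ->]]].
have [al' [Ual' alal' _]] := unitO_inv Ual; have [be' [Ube' bebe' _]] := unitO_inv Ube.
move=> [[u1 [u2 [U1 U2 ->]]] | [u1 [u2 [U1 U2 ->]]]].
- exists (mx2 0 (be' * u2) (al' * u1) 0).
    by right; exists (be' * u2), (al' * u1); split=> //; apply: (unitOM oO).
  by rewrite mx2_mul !mul0r !mulr0 !addr0 !add0r !mulrA alal' bebe' !mul1r.
- exists (mx2 (be' * u2) 0 0 (al' * u1)).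
    by left; exists (be' * u2), (al' * u1); split=> //; apply: (unitOM oO).
  by rewrite mx2_mul !mul0r !mulr0 !addr0 !add0r !mulrA alal' bebe' !mul1r.
Qed.

Lemma Rk_antidiag_pairing n m (i j s t : nat) (v w u1 u2 : quat a b)
    (r' ga : 'M[quat a b]_2) :
  (0 < m)%N -> Xk O m v -> Xk O m w ->
  (s < size (xs m))%N -> (t < size (xs m))%N ->
  unitO O u1 -> unitO O u2 -> v = xr xs m s * u1 -> w = xr xs m t * u2 ->
  Rk O xs n m r' -> Gamma1_antidiag O ga ->
  r' = mx2 (xr xs m i) v w (xr xs m j) *m ga ->
  r' = mx2 (xr xs m s)
           (xr xs m i * qconj w * xr xs m t * qc a b m%:R^-1)
           (xr xs m j * qconj v * xr xs m s * qc a b m%:R^-1)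
           (xr xs m t).
Proof.
move=> m0 [_ hv] [_ hw] hs ht U1 U2 ev ew [s' [t' [v' [w' [[hs' ht'] _ _ _ er]]]]].
move=> [al [be [Ual Ube ->]]]; rewrite mx2_mul !mulr0 !addr0 !add0r => hr.
have /mx2_inj [e1 _ _ e4] := etrans (esym er) hr.
have [_ _ uniq] := reps m.
have ss : s' = s.
  apply: (uniq _ _ (u1 * be)) => //; first exact: unitOM.
  by rewrite [nth _ _ s']e1 ev mulrA.
have tt : t' = t.
  apply: (uniq _ _ (u2 * al)) => //; first exact: unitOM.
  by rewrite [nth _ _ t']e4 ew mulrA.
subst s' t'.
have m0' : (m%:R : rat) != 0 by rewrite pnatr_eq0 -lt0n.
(* [w al = x_t] and [w^* w = m] give [al = w^* x_t / m]; likewise for [be]. *)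
have hal : al = qconj w * xr xs m t * qc a b m%:R^-1.
  by rewrite e4 mulrA mulq_conjl hw -qc_central mulrA qcM mulVf // qc1 mul1r.
have hbe : be = qconj v * xr xs m s * qc a b m%:R^-1.
  by rewrite e1 mulrA mulq_conjl hv -qc_central mulrA qcM mulVf // qc1 mul1r.
by rewrite hr -e1 -e4 {1}hal {1}hbe !mulrA.
Qed.

Variables (n : nat) (Rm' : 'M[quat a b]_2 -> Prop).
Hypothesis n_gt0 : (0 < n)%N.
Hypothesis Rm'_pairs :
  ~~ odd n ->
  [/\ (forall g, Rm' g -> Rk O xs n n./2 g),
      (forall g, Rk O xs n n./2 g ->
         exists g', Rm' g' /\ (g' = g \/ exists ga, Gamma1_antidiag O ga /\ g' = g *m ga)) &
      (forall g g' ga, Rm' g -> Rm' g' -> Gamma1_antidiag O ga -> g' = g *m ga -> g = g')].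

Definition Rk_reps (g : 'M[quat a b]_2) : Prop :=
  (exists k, (n./2 < k <= n)%N /\ Rk O xs n k g) \/ (~~ odd n /\ Rm' g).

Lemma Rk_reps_Rk g :
  Rk_reps g ->
  exists k, [/\ (0 < k)%N, (k <= n)%N, Rk O xs n k g & (n < k.*2)%N \/ (Rm' g /\ k.*2 = n)].
Proof.
case=> [[k [/andP [k_gt kn] Rkg]] | [ev Rm'g]].
  by exists k; split=> //; [exact: leq_ltn_trans k_gt | left; rewrite -ltn_half_double].
have [Rm'_Rk _ _] := Rm'_pairs ev; have n2 := even_halfK ev.
by exists n./2; split; [lia | lia | exact: Rm'_Rk | right].
Qed.

Lemma Rk_reps_cover g :
  M2O_units O g -> GU2n n g -> exists s h, [/\ Rk_reps s, Gamma1 O h & g = s *m h].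
Proof.
move=> Mg GU.
have [k [s [h [kn nk_le_k Rs Gh ->]]]] := M2O_GU2n_Rk_decomposition Mg GU.
have [n_lt | n_ge] := ltnP n k.*2.
  by exists s, h; split=> //; left; exists k; rewrite ltn_half_double n_lt kn.
have n2 : n = k.*2 by lia.
have ev : ~~ odd n by rewrite n2 odd_double.
have k_half : k = n./2 by rewrite n2 doubleK.
have [_ Rk_Rm' _] := Rm'_pairs ev; rewrite k_half in Rs.
have [g' [Rm'g' [g's | [ga [Gga g'sga]]]]] := Rk_Rm' s Rs.
  by exists s, h; split=> //; right; rewrite -g's.
have [h' Gh' ->] := Gamma1_antidiag_divl Gga Gh.
by exists g', h'; rewrite g'sga mulmxA; split=> //; right; rewrite -g'sga.
Qed.

Lemma Rk_reps_uniq s s' h : Rk_reps s -> Rk_reps s' -> Gamma1 O h -> s' = s *m h -> s = s'.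
Proof.
move=> /Rk_reps_Rk [k [k0 kn Rs ck]] /Rk_reps_Rk [k' [_ _ Rs' ck']].
case=> [[u1 [u2 [U1 U2 ->]]] es' | Gh es'].
  exact/esym/(Rk_coset_diag_eq k0 Rs Rs' U1 U2 es').
have k'_eq := Rk_coset_antidiag_norm Rs Rs' Gh es'.
case: ck ck' => [? | [Rm's k2]] [? | [Rm's' k'2]]; try lia.
have ev : ~~ odd n by rewrite -k2 odd_double.
by have [_ _ Rm'_uniq] := Rm'_pairs ev; apply: Rm'_uniq Gh es'.
Qed.

Lemma Rk_reps_coset_reps :
  coset_reps (fun g => M2O_units O g /\ GU2n n g) (Gamma1 O) Rk_reps.
Proof.
split; last exact: Rk_reps_uniq.
  by move=> s /Rk_reps_Rk [k [k0 kn Rs _]]; exact: (Rk_M2O_GU2n k0 kn Rs).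
by move=> g [Mg GU]; apply: Rk_reps_cover.
Qed.

End CosetRepresentatives.

Unset Implicit Arguments.

Theorem corollary5p14
  (p : nat) (a b : int) (O : quat a b -> Prop) (n : nat)
  (xs : nat -> seq (quat a b)) (Rm' : 'M[quat a b]_2 -> Prop) :
  prime p ->
  ramified_exactly_at_p_infty a b p ->
  is_maximal_order O ->
  (0 < n)%N ->
  (* for every k, x_{1,k}, ..., x_{t_k,k} represent X_k / O^x *)
  (forall k, reps_of O (Xk O k) (xs k)) ->
  (* n = 2m even: R_m' is a subset of R_m containing exactly one matrix
     from each class {r, r * gamma (gamma antidiagonal in Gamma^(1))} *)
  (~~ odd n ->
     [/\ (forall g, Rm' g -> Rk O xs n n./2 g),
         (forall g, Rk O xs n n./2 g ->
            exists g', Rm' g' /\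
              (g' = g \/ exists ga, Gamma1_antidiag O ga /\ g' = g *m ga)) &
         (forall g g' ga, Rm' g -> Rm' g' -> Gamma1_antidiag O ga ->
            g' = g *m ga -> g = g')]) ->
  (* the claimed set of representatives of
     (GU_2(D)_n \cap M_2(O)^x) / Gamma^(1) *)
  coset_reps (fun g => M2O_units O g /\ GU2n n g) (Gamma1 O)
    (fun g => (exists k, (n./2 < k <= n)%N /\ Rk O xs n k g)
              \/ (~~ odd n /\ Rm' g))
  /\
  (* description of the antidiagonal pairing on R_m, n = 2m *)
  (~~ odd n -> forall (i j s t : nat) (v w u1 u2 : quat a b)
                      (r' ga : 'M[quat a b]_2),
     (i < size (xs n./2))%N -> (j < size (xs n./2))%N ->
     Xk O (n - n./2) v -> Xk O (n - n./2) w ->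
     xr xs n./2 i * qconj w + v * qconj (xr xs n./2 j) = 0 ->
     (s < size (xs n./2))%N -> (t < size (xs n./2))%N ->
     unitO O u1 -> unitO O u2 ->
     v = xr xs n./2 s * u1 -> w = xr xs n./2 t * u2 ->
     Rk O xs n n./2 r' -> Gamma1_antidiag O ga ->
     r' = mx2 (xr xs n./2 i) v w (xr xs n./2 j) *m ga ->
     r' = mx2 (xr xs n./2 s)
              (xr xs n./2 i * qconj w * xr xs n./2 t * qc a b (n./2)%:R^-1)
              (xr xs n./2 j * qconj v * xr xs n./2 s * qc a b (n./2)%:R^-1)
              (xr xs n./2 t)).
Proof.
move=> _ [ha hb _] [oO _] n_gt0 reps Rm'_pairs.
split; first exact: (Rk_reps_coset_reps ha hb oO reps n_gt0 Rm'_pairs).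
move=> ev i j s t v w u1 u2 r' ga _ _.
have n2 := even_halfK ev.
have [m_gt0 nm] : (0 < n./2)%N /\ (n - n./2 = n./2)%N by lia.
rewrite nm => Xv Xw _; exact: (Rk_antidiag_pairing oO reps m_gt0 Xv Xw).
Qed.
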